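(* Let $\mathcal{G}=(\mathcal{V},\mathcal{E})$ be an undirected graph with $n$ nodes and $E$ edges, with incidence matrix $A\in\mathbb{R}^{n\times E}$. For each node $i$ let $f_i:\mathbb{R}\to\mathbb{R}$ be $M_i$-smooth and $\mu_i$-strongly convex, and let $F(\lambda)=\sum_{i=1}^n f_i^*(u_i^T A\lambda)$ for $\lambda\in\mathbb{R}^E$. Then for every $\lambda\in\mathbb{R}^E$, $$\|\nabla F(\lambda)\|_2=\|\nabla F(\lambda)\|_{A^+A}=\|\nabla F(\lambda)\|_{A^+A}^*.$$
   Context: The incidence matrix $A$ has, in each column $\ell$ (edge $\ell\equiv(i,j)$), one entry $+1$ and one entry $-1$ in the rows of the endpoints $i,j$ (signs arbitrary), and zeros elsewhere. $u_i$ is the $i$-th standard basis vector of $\mathbb{R}^n$; $f_i^*(y)=\sup_x(yx-f_i(x))$ is the Fenchel conjugate. $A^+$ denotes the Moore–Penrose pseudo-inverse of $A$. The semi-norm $\|x\|_{A^+A}$ is $(x^TA^+Ax)^{1/2}$, and its dual is $\|z\|_{A^+A}^*=\sup_{x\in\mathbb{R}^E}\{z^Tx : \|x\|_{A^+A}\le 1\}$. *)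

From HB Require Import structures.
From mathcomp Require Import all_boot all_order all_algebra.
From mathcomp Require Import all_classical all_reals all_analysis.
Set Implicit Arguments. Unset Strict Implicit. Unset Printing Implicit Defensive.
Import Order.TTheory GRing.Theory Num.Theory.
Import numFieldNormedType.Exports.
Local Open Scope classical_set_scope.
Local Open Scope ring_scope.

Section Defs.
Variable R : realType.

Definition smooth_fun (M : R) (f : R -> R) : Prop :=
  (forall x : R, derivable f x 1) /\
  (forall x y : R, `|derive1 f x - derive1 f y| <= M * `|x - y|).

Definition strongly_convex (mu : R) (f : R -> R) : Prop :=
  0 < mu /\
  (forall x y t : R, 0 <= t -> t <= 1 ->
     f (t * x + (1 - t) * y) <=
       t * f x + (1 - t) * f y - mu / 2 * t * (1 - t) * (x - y) ^+ 2).

Definition fconj (f : R -> R) (y : R) : R :=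
  sup [set y * x - f x | x in [set: R]].

(* A is the incidence matrix of the graph whose edge l joins src l and tgt l
   (src l <> tgt l): column l has +1 at row src l, -1 at row tgt l, 0 elsewhere. *)
Definition is_incidence (n E : nat) (src tgt : 'I_E -> 'I_n)
    (A : 'M[R]_(n, E)) : Prop :=
  (forall l, src l != tgt l) /\
  (forall i l, A i l = (i == src l)%:R - (i == tgt l)%:R).

Definition is_pinv (m k : nat) (A : 'M[R]_(m, k)) (X : 'M[R]_(k, m)) : Prop :=
  [/\ A *m X *m A = A, X *m A *m X = X,
      (A *m X)^T = A *m X & (X *m A)^T = X *m A].

Definition gradient (E : nat) (F : 'cV[R]_E -> R) (x : 'cV[R]_E) : 'cV[R]_E :=
  \col_j ('d F x (delta_mx j 0)).

Definition norm2 (E : nat) (z : 'cV[R]_E) : R := Num.sqrt (\sum_j z j 0 ^+ 2).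

Definition seminormP (E : nat) (P : 'M[R]_E) (x : 'cV[R]_E) : R :=
  Num.sqrt ((x^T *m P *m x) 0 0).

Definition dualnormP (E : nat) (P : 'M[R]_E) (z : 'cV[R]_E) : R :=
  sup [set (z^T *m x) 0 0 | x in [set x | seminormP P x <= 1]].

End Defs.

From HB Require Import structures.
From mathcomp Require Import all_boot all_order all_algebra.
From mathcomp Require Import all_classical all_reals all_analysis.
From mathcomp Require Import ring lra.
Set Implicit Arguments. Unset Strict Implicit. Unset Printing Implicit Defensive.
Import Order.TTheory GRing.Theory Num.Theory.
Import numFieldNormedType.Exports.
Local Open Scope classical_set_scope.
Local Open Scope ring_scope.

(* Strong convexity makes each f_i' strongly monotone, and with continuity
   also onto R; so the supremum defining f_i^*(y) is attained at the x with
   f_i'(x) = y, and comparing two such maximisers gives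
   |f_i^*(y + h) - f_i^*(y) - h x| <= h^2 / mu_i, i.e. f_i^* is differentiable.
   By the chain rule the gradient of F is then A^T c for some c.  The
   Penrose equations make P = A^+ A a symmetric idempotent fixing the range
   of A^T, on which ||.||_P is the Euclidean norm; by Cauchy-Schwarz the
   dual semi-norm of a vector fixed by P is its Euclidean norm as well. *)

Lemma sup_eq_ub (R : realType) (S : set R) (a : R) :
  S a -> (forall b, S b -> b <= a) -> sup S = a.
Proof.
move=> Sa ub; apply/eqP; rewrite eq_le; apply/andP; split.
  by apply: ge_sup; [exists a | move=> b /ub].
by apply: ub_le_sup => //; exists a => b /ub.
Qed.

Lemma lipschitz_continuous (R : realType) (V W : normedModType R) (k : R)
    (g : V -> W) :
  (forall x y, `|g x - g y| <= k * `|x - y|) -> continuous g.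
Proof.
move=> g_lip x; apply/cvgrPdist_lt => e e0; apply/nbhs_ballP.
have k1 : 0 < `|k| + 1 by rewrite ltr_wpDl.
exists (e / (`|k| + 1)); first exact: divr_gt0.
move=> z; rewrite -ball_normE /= => xz.
have {}xz : (`|k| + 1) * `|x - z| < e by rewrite mulrC -ltr_pdivlMr.
have := g_lip x z; have := ler_norm k; have := normr_ge0 (x - z); nra.
Qed.

Section StronglyConvexConjugate.
Variables (R : realType) (mu : R) (f : R -> R).
Hypothesis f_sc : strongly_convex mu f.
Hypothesis f_der : forall x, derivable f x 1.
Hypothesis f'_cont : continuous (derive1 f).

Let mu_gt0 : 0 < mu := f_sc.1.

Lemma strongly_convex_first_order x z :
  f x + derive1 f x * (z - x) + mu / 2 * (z - x) ^+ 2 <= f z.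
Proof.
set d := z - x.
have dfx : differentiable f x by exact/derivable1_diffP.
have lim_quot :
    (fun t => t^-1 * (f (t * d + x) - f x)) @ 0^'+ --> derive1 f x * d.
  have Dd : 'D_d f x = derive1 f x * d by rewrite deriveE // deriv1E // mulrC.
  have d_der := @diff_derivable _ _ _ f x d dfx.
  rewrite -Dd; apply: cvg_trans d_der; apply: cvg_app.
  by apply: within_subset => t /lt0r_neq0.
have lim_bound : (fun t => f z - f x - mu / 2 * (1 - t) * d ^+ 2) @ 0^'+
    --> f z - f x - mu / 2 * (1 - 0) * d ^+ 2.
  apply: cvg_at_right_filter; apply: cvgB; first exact: cvg_cst.
  apply: cvgM; last exact: cvg_cst.
  apply: cvgM; first exact: cvg_cst.
  by apply: cvgB; [exact: cvg_cst | exact: cvg_id].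
suff : derive1 f x * d <= f z - f x - mu / 2 * (1 - 0) * d ^+ 2 by lra.
apply: ler_cvg_to lim_quot lim_bound _; near=> t.
have t0 : 0 < t by near: t; exact: nbhs_right_gt.
have t1 : t <= 1 by near: t; exact: nbhs_right_le.
have := f_sc.2 z x t (ltW t0) t1.
have -> : t * z + (1 - t) * x = t * d + x by rewrite /d; ring.
rewrite ler_pdivrMl // -/d; lra.
Unshelve. all: by end_near.
Qed.

Lemma derive1_strongly_monotone x z :
  mu * (z - x) ^+ 2 <= (derive1 f z - derive1 f x) * (z - x).
Proof.
have := strongly_convex_first_order x z.
have := strongly_convex_first_order z x.
rewrite -opprB sqrrN; lra.
Qed.

Lemma derive1_surjective y : exists x, derive1 f x = y.
Proof.
set c := derive1 f 0; pose b := `|y - c| / mu + 1.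
have b_gt0 : 0 < b by rewrite ltr_wpDl // divr_ge0 // ltW.
have mub : mu * b = `|y - c| + mu.
  by rewrite mulrDr mulr1 mulrCA divff ?mulr1 // gt_eqF.
have up : `|y - c| + mu <= derive1 f b - c.
  rewrite -mub; have := derive1_strongly_monotone 0 b.
  by rewrite subr0 expr2 mulrA ler_pM2r.
have down : `|y - c| + mu <= c - derive1 f (- b).
  rewrite -mub; have := derive1_strongly_monotone (- b) 0.
  by rewrite sub0r opprK expr2 mulrA ler_pM2r.
have := ler_norm (y - c); have := ler_norm (c - y); rewrite distrC => yl yr.
have [x _ <-] : exists2 x, x \in `[- b, b] & derive1 f x = y.
  apply: IVT.
  - by rewrite lerNl; apply: le_trans (ltW b_gt0); rewrite oppr_le0 ltW.
  - exact/continuous_subspaceT.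
  - by rewrite ge_min le_max; apply/andP; split; apply/orP; [left|right];
      have := mu_gt0; lra.
by exists x.
Qed.

Lemma derive1_argmax x z : derive1 f x * z - f z <= derive1 f x * x - f x.
Proof.
have := strongly_convex_first_order x z.
have := sqr_ge0 (z - x); have := mu_gt0; nra.
Qed.

Lemma fconj_derive1 x : fconj f (derive1 f x) = derive1 f x * x - f x.
Proof.
by apply: sup_eq_ub; [exists x | move=> _ [z _ <-]; exact: derive1_argmax].
Qed.

Lemma fconj_quadratic_approx x h :
  `|fconj f (derive1 f x + h) - fconj f (derive1 f x) - h * x| <= h ^+ 2 / mu.
Proof.
(* x and x' maximise the suprema defining the two conjugate values, which
   pins the remainder between 0 and h (x' - x) <= h ^+ 2 / mu. *)
have [x' fx'] := derive1_surjective (derive1 f x + h).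
rewrite -{1}fx' !fconj_derive1 fx'.
have := derive1_argmax x' x; have := derive1_argmax x x'.
have := derive1_strongly_monotone x x'; rewrite fx' addrAC subrr add0r.
have := sqr_ge0 (h - mu * (x' - x)).
rewrite ler_pdivlMr //.
move=> sq mon l1 l2; rewrite ger0_norm; last lra.
have := mu_gt0; nra.
Qed.

Lemma fconj_derivable y : derivable (fconj f) y 1.
Proof.
have [x <-] := derive1_surjective y.
apply/cvg_ex; exists x; apply/cvgrPdist_le => e e0; near=> h.
have h0 : h != 0 by near: h; exact: nbhs_dnbhs_neq.
have he : `|h| <= e * mu by near: h; apply: dnbhs0_le; exact: mulr_gt0.
rewrite /= [h%:A]mulr1 (addrC h) -[_ *: _]/(_ * _).
set F' := fconj f (derive1 f x + h); set F := fconj f (derive1 f x).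
have -> : x - h^-1 * (F' - F) = - (h^-1 * (F' - F - h * x)) by field.
rewrite normrN normrM normfV ler_pdivrMl ?normr_gt0 //.
apply: le_trans (fconj_quadratic_approx x h) _.
rewrite -real_normK ?num_real // ler_pdivrMr //; have := normr_ge0 h; nra.
Unshelve. all: by end_near.
Qed.

End StronglyConvexConjugate.

Lemma diff_sum (R : realType) (V W : normedModType R) n (G : 'I_n -> V -> W) x :
  (forall i, differentiable (G i) x) ->
  forall v, 'd (\sum_(i < n) G i) x v = \sum_(i < n) 'd (G i) x v.
Proof.
elim: n G => [|n IH] G dG v; first by rewrite !big_ord0 diff_cst.
rewrite !big_ord_recr /= diffD //=; last exact: differentiable_sum.
by rewrite IH.
Qed.

Section MulmxCoord.
Variables (R : realType) (m n p : nat) (A : 'M[R]_(m, n)) (i : 'I_m) (j : 'I_p).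

Let coordA (v : 'M[R]_(n, p)) : R := (A *m v) i j.

Lemma differentiable_mulmx_coord v : differentiable coordA v.
Proof.
have -> : coordA = \sum_k (fun v : 'M[R]_(n, p) => A i k *: v k j).
  by apply/funext => w; rewrite fct_sumE /coordA mxE.
by apply: differentiable_sum => k; apply/differentiableZ/differentiable_coord.
Qed.

Lemma diff_mulmx_coord v : 'd coordA v = coordA :> (_ -> _).
Proof.
have coordA_lin : linear coordA.
  by move=> a u w; rewrite /coordA mulmxDr -scalemxAr !mxE.
pose L : {linear 'M[R]_(n, p) -> R} :=
  HB.pack coordA (GRing.isLinear.Build _ _ _ _ _ coordA_lin).
rewrite -[coordA]/(L : _ -> _) diff_lin //.
by move=> w; apply/differentiable_continuous/differentiable_mulmx_coord.
Qed.

End MulmxCoord.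

Lemma gradient_sum_comp_rows (R : realType) n E (A : 'M[R]_(n, E))
    (g : 'I_n -> R -> R) (lam : 'cV[R]_E) :
  (forall i, derivable (g i) ((A *m lam) i 0) 1) ->
  let F := fun lam : 'cV[R]_E => \sum_(i < n) g i ((A *m lam) i 0) in
  differentiable F lam /\
  gradient F lam = A^T *m \col_i derive1 (g i) ((A *m lam) i 0).
Proof.
move=> g_der F.
pose G i := g i \o (fun v : 'cV[R]_E => (A *m v) i 0).
have FE : F = \sum_(i < n) G i by apply/funext => v; rewrite fct_sumE.
have dG i : differentiable (G i) lam.
  apply: differentiable_comp; first exact: differentiable_mulmx_coord.
  exact/derivable1_diffP.
split; first by rewrite FE; exact: differentiable_sum.
apply/matrixP => k l; rewrite (ord1 l) !mxE FE diff_sum //.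
apply: eq_bigr => i _; rewrite diff_comp; last first.
- exact/derivable1_diffP.
- exact: differentiable_mulmx_coord.
by rewrite /= diff_mulmx_coord (deriv1E (g_der i)) -colE !mxE.
Qed.

Section Norm2.
Variables (R : realType) (E : nat).
Implicit Types a b : 'cV[R]_E.

Lemma dotmxE a b : (a^T *m b) 0 0 = \sum_j a j 0 * b j 0.
Proof. by rewrite mxE; apply: eq_bigr => j _; rewrite mxE. Qed.

Lemma sum_sqr_ge0 a : 0 <= \sum_j a j 0 ^+ 2.
Proof. by apply: sumr_ge0 => j _; exact: sqr_ge0. Qed.

Lemma norm2_sqr a : norm2 a ^+ 2 = \sum_j a j 0 ^+ 2.
Proof. by rewrite sqr_sqrtr // sum_sqr_ge0. Qed.

Lemma dotmx_self a : (a^T *m a) 0 0 = norm2 a ^+ 2.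
Proof. by rewrite norm2_sqr dotmxE; apply: eq_bigr => j _; rewrite expr2. Qed.

Lemma norm2E a : norm2 a = Num.sqrt ((a^T *m a) 0 0).
Proof. by rewrite dotmxE /norm2; under eq_bigr do rewrite expr2. Qed.

Lemma norm2_ge0 a : 0 <= norm2 a.
Proof. exact: sqrtr_ge0. Qed.

Lemma norm2Z (c : R) a : norm2 (c *: a) = `|c| * norm2 a.
Proof.
rewrite /norm2 -sqrtr_sqr -sqrtrM; last exact: sqr_ge0.
by rewrite mulr_sumr; congr Num.sqrt; apply: eq_bigr => j _; rewrite mxE exprMn.
Qed.

Lemma norm2_eq0 a : norm2 a = 0 -> a = 0.
Proof.
move=> /eqP; rewrite sqrtr_eq0 => a_le0.
have : \sum_j a j 0 ^+ 2 == 0 by rewrite eq_le a_le0 sum_sqr_ge0.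
rewrite psumr_eq0 => [/allP a0|j _]; last exact: sqr_ge0.
apply/matrixP => j k; rewrite (ord1 k) mxE.
by apply/eqP; rewrite -sqrf_eq0; exact: a0 (mem_index_enum j).
Qed.

Lemma dotmx_le_norm2 a b : (a^T *m b) 0 0 <= norm2 a * norm2 b.
Proof.
have [a0|na0] := eqVneq (norm2 a) 0.
  by rewrite a0 mul0r (norm2_eq0 a0) trmx0 mul0mx mxE.
have [b0|nb0] := eqVneq (norm2 b) 0.
  by rewrite b0 mulr0 (norm2_eq0 b0) mulmx0 mxE.
rewrite dotmxE; set na := norm2 a; set nb := norm2 b; set ab := \sum_j _.
have expand :
    \sum_j (nb * a j 0 - na * b j 0) ^+ 2 = 2 * (na * nb) * (na * nb - ab).
  have -> : \sum_j (nb * a j 0 - na * b j 0) ^+ 2 = nb ^+ 2 * \sum_j a j 0 ^+ 2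
      + na ^+ 2 * \sum_j b j 0 ^+ 2 - 2 * na * nb * ab.
    rewrite /ab !mulr_sumr -big_split -sumrB /=.
    by apply: eq_bigr => j _; ring.
  by rewrite -!norm2_sqr -/na -/nb; ring.
have nanb_gt0 : 0 < 2 * (na * nb).
  by rewrite !mulr_gt0 // lt0r ?na0 ?nb0 ?norm2_ge0.
have : 0 <= 2 * (na * nb) * (na * nb - ab).
  by rewrite -expand; apply: sumr_ge0 => j _; exact: sqr_ge0.
by rewrite pmulr_rge0 // subr_ge0.
Qed.

End Norm2.

Section OrthogonalProjector.
Variables (R : realType) (E : nat) (P : 'M[R]_E).
Hypotheses (P_sym : P^T = P) (P_idem : P *m P = P).

Lemma seminormP_proj x : seminormP P x = norm2 (P *m x).
Proof.
by rewrite /seminormP norm2E trmx_mul P_sym mulmxA -(mulmxA x^T P P) P_idem.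
Qed.

Variable g : 'cV[R]_E.
Hypothesis Pg : P *m g = g.

Lemma norm2_seminormP_fixed : norm2 g = seminormP P g.
Proof. by rewrite seminormP_proj Pg. Qed.

Lemma dualnormP_fixed : dualnormP P g = norm2 g.
Proof.
have gTP : g^T *m P = g^T by rewrite -P_sym -trmx_mul Pg.
apply: sup_eq_ub => [|_ [x /= Px_le1 <-]]; last first.
  rewrite -gTP -mulmxA; apply: le_trans (dotmx_le_norm2 _ _) _.
  by rewrite ler_piMr ?norm2_ge0 // -seminormP_proj.
have [g0|ng0] := eqVneq (norm2 g) 0.
  exists 0; last by rewrite mulmx0 mxE g0.
  by rewrite /= seminormP_proj mulmx0 -(scale0r g) norm2Z normr0 mul0r ler01.
exists ((norm2 g)^-1 *: g).
  rewrite /= seminormP_proj -scalemxAr Pg norm2Z.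
  by rewrite ger0_norm ?invr_ge0 ?norm2_ge0 // mulVf.
by rewrite -scalemxAr mxE dotmx_self expr2 mulKf.
Qed.

End OrthogonalProjector.

Section PseudoInverse.
Variables (R : realType) (m k : nat) (A : 'M[R]_(m, k)) (Ap : 'M[R]_(k, m)).
Hypothesis Ap_pinv : is_pinv A Ap.

Lemma pinv_proj_sym : (Ap *m A)^T = Ap *m A.
Proof. by case: Ap_pinv. Qed.

Lemma pinv_proj_idem : Ap *m A *m (Ap *m A) = Ap *m A.
Proof. by case: Ap_pinv => _ XAX _ _; rewrite mulmxA XAX. Qed.

Lemma pinv_proj_trmx_mul p (c : 'M[R]_(m, p)) :
  Ap *m A *m (A^T *m c) = A^T *m c.
Proof.
case: Ap_pinv => AXA _ _ _.
by rewrite mulmxA -pinv_proj_sym -trmx_mul mulmxA AXA.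
Qed.

End PseudoInverse.

Theorem lemma3 (R : realType) (n E : nat) (src tgt : 'I_E -> 'I_n)
    (A : 'M[R]_(n, E)) (Ap : 'M[R]_(E, n))
    (f : 'I_n -> R -> R) (M mu : 'I_n -> R) :
  is_incidence src tgt A ->
  is_pinv A Ap ->
  (forall i, smooth_fun (M i) (f i)) ->
  (forall i, strongly_convex (mu i) (f i)) ->
  let F := fun lam : 'cV[R]_E => \sum_(i < n) fconj (f i) ((A *m lam) i 0) in
  forall lam : 'cV[R]_E,
    differentiable F lam /\
    norm2 (gradient F lam) = seminormP (Ap *m A) (gradient F lam) /\
    seminormP (Ap *m A) (gradient F lam) = dualnormP (Ap *m A) (gradient F lam).
Proof.
move=> _ Ap_pinv f_smooth f_sc F lam.
have fconj_der i y : derivable (fconj (f i)) y 1.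
  have [f_der f'_lip] := f_smooth i.
  exact: fconj_derivable (f_sc i) f_der (lipschitz_continuous f'_lip) y.
have [dF ->] :=
  gradient_sum_comp_rows (fun i => fconj_der i ((A *m lam) i 0)).
have P_sym := pinv_proj_sym Ap_pinv; have P_idem := pinv_proj_idem Ap_pinv.
have Pg := pinv_proj_trmx_mul Ap_pinv.
by split=> //; rewrite -norm2_seminormP_fixed ?dualnormP_fixed.
Qed.
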